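(* Let Assumptions 1 (with $\delta\in(0,1]$) and 2 hold. For $A\ge1$ define $\alpha=2L\{1-\Phi(A\sqrt{2\log L})\}+2A_0(1+A\sqrt{2\log L})^{1+\delta}/(L^{A^2-1}d_{n,\delta}^{2+\delta})$, set $r=A\sqrt{2\log(L)/n}$, and assume $L\le\exp(d_{n,\delta}^2/(2A^2))$. Let $\widehat\beta$ be any solution of $$\min\Big\{|{\bf D_X}^{-1}\beta|_1:\ \beta\in\mathbb R^K,\ \Big|\frac1n{\bf D_Z}{\bf Z}^T({\bf Y}-{\bf X}\beta)\Big|_\infty\le\sigma_*r\Big\},$$ where $\sigma_*$ is the constant of Assumption 2. Then with probability at least $1-\alpha-\gamma_1$, $$\big|{\bf D_X}^{-1}(\widehat\beta-\beta^* )\big|_p\le\frac{2\sigma_*r}{\kappa_{p,J(\beta^* )}}\quad\forall p\in[1,\infty],\qquad |\widehat\beta_k-\beta^*_k|\le\frac{2\sigma_*r}{x_{k*}\kappa^*_{k,J(\beta^* )}}\quad\forall k=1,\dots,K,$$ where the sensitivities are those defined with the cone $C_J$ taken with $c=0$, i.e. $C_J=\{\Delta:|\Delta_{J^c}|_1\le|\Delta_J|_1\}$.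
   Context: Setting: integers $n,K,L$ with $L\ge K$, $k_{\rm end}\in\{0,\dots,K\}$; observations $(y_i,x_i,z_i)$, $i=1,\dots,n$, with $y_i=x_i^T\beta^*+u_i$, $x_i\in\mathbb R^K$, $z_i\in\mathbb R^L$, the $(y_i,x_i,z_i,u_i)$ mutually independent; the exogenous regressors are their own instruments: $z_{li}=x_{(k_{\rm end}+l)i}$ for $l\le K-k_{\rm end}$. ${\bf Y},{\bf X},{\bf Z}$ data matrices; $x_{k*}=\max_i|x_{ki}|$, $z_{l*}=\max_i|z_{li}|$ (positive); ${\bf D_X}={\rm diag}(x_{k*}^{-1})$, ${\bf D_Z}={\rm diag}(z_{l*}^{-1})$; $\Psi_n=\frac1n{\bf D_Z}{\bf Z}^T{\bf X}{\bf D_X}$; $\mathbb E_n[U^2]=\frac1n\sum u_i^2$. $J(\beta)$ support; $\Delta_J$ zeroes coordinates outside $J$. Sensitivities: $\kappa_{p,J}=\inf\{|\Psi_n\Delta|_\infty:\Delta\in C_J,|\Delta|_p=1\}$, $\kappa^*_{k,J}=\inf\{|\Psi_n\Delta|_\infty:\Delta\in C_J,\Delta_k=1\}$. Assumption 1: for all $i,l$, $\mathbb E|z_{li}u_i|^{2+\delta}<\infty$, $\mathbb E[z_{li}u_i]=0$, $z_{li}u_i$ not a.s. zero; $d_{n,\delta}=\min_l\sqrt{\sum_i\mathbb E z_{li}^2u_i^2}/(\sum_i\mathbb E|z_{li}u_i|^{2+\delta})^{1/(2+\delta)}$. Assumption 2: there are $\sigma_*>0$, $\gamma_1\in(0,1)$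 with $\mathbb P(\mathbb E_n[U^2]\le\sigma_*^2)\ge1-\gamma_1$. $\Phi$ is the standard normal cdf and $A_0$ the absolute constant of the Jing–Shao–Wang self-normalized moderate deviation bound: for independent mean-zero $X_i$ with $0<\mathbb E|X_i|^{2+\delta}<\infty$, $|\mathbb P(S_n/V_n\ge x)-(1-\Phi(x))|\le A_0(1+x)^{1+\delta}e^{-x^2/2}/d^{2+\delta}$ for $0\le x\le d$, with $S_n=\sum X_i$, $V_n^2=\sum X_i^2$, $d=(\sum\mathbb EX_i^2)^{1/2}/(\sum\mathbb E|X_i|^{2+\delta})^{1/(2+\delta)}$. *)

From HB Require Import structures.
From mathcomp Require Import all_boot all_order all_algebra.
From mathcomp Require Import all_classical all_reals all_analysis.
Set Implicit Arguments. Unset Strict Implicit. Unset Printing Implicit Defensive.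
Import Order.TTheory GRing.Theory Num.Theory.
Local Open Scope classical_set_scope.
Local Open Scope ring_scope.

(* l_p norm, p in [1, +oo] (p is an extended real; -oo is never used) *)
Definition lpnorm (R : realType) (K : nat) (p : \bar R) (v : 'I_K -> R) : R :=
  match p with
  | EFin q => powR (\sum_(k < K) powR `|v k| q) q^-1
  | +oo%E => \big[Num.max/0]_(k < K) `|v k|
  | -oo%E => 0
  end.

Definition l1norm (R : realType) (K : nat) (v : 'I_K -> R) : R :=
  \sum_(k < K) `|v k|.

Definition linfnorm (R : realType) (L : nat) (v : 'I_L -> R) : R :=
  \big[Num.max/0]_(l < L) `|v l|.

Definition supp (R : realType) (K : nat) (b : 'I_K -> R) : set 'I_K :=
  [set k | b k != 0].

Definition coneC (R : realType) (K : nat) (J : set 'I_K) : set ('I_K -> R) :=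
  [set D | \sum_(k < K | ~~ `[< J k >]) `|D k| <= \sum_(k < K | `[< J k >]) `|D k|].

Definition colmax (R : realType) (n K : nat) (x : 'I_n -> 'I_K -> R) (k : 'I_K) : R :=
  \big[Num.max/0]_(i < n) `|x i k|.

(* Psi_n = (1/n) D_Z Z^T X D_X *)
Definition Psi (R : realType) (n K L : nat) (x : 'I_n -> 'I_K -> R)
  (z : 'I_n -> 'I_L -> R) (l : 'I_L) (k : 'I_K) : R :=
  (n%:R)^-1 * (colmax z l)^-1 * (colmax x k)^-1 * \sum_(i < n) z i l * x i k.

Definition Psimul (R : realType) (n K L : nat) (x : 'I_n -> 'I_K -> R)
  (z : 'I_n -> 'I_L -> R) (D : 'I_K -> R) : 'I_L -> R :=
  fun l => \sum_(k < K) Psi x z l k * D k.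

(* sensitivity kappa_{p,J} (extended real: inf of the empty set is +oo) *)
Definition kappa (R : realType) (n K L : nat) (x : 'I_n -> 'I_K -> R)
  (z : 'I_n -> 'I_L -> R) (p : \bar R) (J : set 'I_K) : \bar R :=
  ereal_inf [set (linfnorm (Psimul x z D))%:E
            | D in [set D | coneC J D /\ lpnorm p D = 1]].

Definition kappa_star (R : realType) (n K L : nat) (x : 'I_n -> 'I_K -> R)
  (z : 'I_n -> 'I_L -> R) (k : 'I_K) (J : set 'I_K) : \bar R :=
  ereal_inf [set (linfnorm (Psimul x z D))%:E
            | D in [set D | coneC J D /\ D k = 1]].

Definition feasible (R : realType) (n K L : nat) (y : 'I_n -> R)
  (x : 'I_n -> 'I_K -> R) (z : 'I_n -> 'I_L -> R) (bound : R) (b : 'I_K -> R) :=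
  linfnorm (fun l : 'I_L => (n%:R)^-1 * (colmax z l)^-1 *
     \sum_(i < n) z i l * (y i - \sum_(k < K) x i k * b k)) <= bound.

Definition objective (R : realType) (n K : nat) (x : 'I_n -> 'I_K -> R)
  (b : 'I_K -> R) : R :=
  l1norm (fun k => colmax x k * b k).

Definition is_solution (R : realType) (n K L : nat) (y : 'I_n -> R)
  (x : 'I_n -> 'I_K -> R) (z : 'I_n -> 'I_L -> R) (bound : R) (b : 'I_K -> R) :=
  feasible y x z bound b /\
  forall b', feasible y x z bound b' -> objective x b <= objective x b'.

Definition gen_sigma (d : measure_display) (T : measurableType d) (R : realType)
  (F : set (T -> R)) : set (set T) :=
  <<s \bigcup_(f in F) [set f @^-1` B | B in [set B : set R | measurable B]] >>.

Definition mutually_independent (d : measure_display) (T : measurableType d)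
  (R : realType) (P : probability T R) (I : finType) (F : I -> set (set T)) :=
  forall (S : {set I}) (E : I -> set T),
    (forall i, i \in S -> F i (E i)) ->
    P (\big[setI/setT]_(i in S) E i) = (\prod_(i in S) P (E i))%E.

Definition Phi (R : realType) (x : R) : R :=
  fine (normal_prob 0 1 `]-oo, x]).

Definition Ex (d : measure_display) (T : measurableType d) (R : realType)
  (P : probability T R) (f : T -> R) : R :=
  fine (\int[P]_w (f w)%:E).

(* the quantity d of Jing-Shao-Wang for a family X_1..X_m *)
Definition jsw_d (d : measure_display) (T : measurableType d) (R : realType)
  (P : probability T R) (delta : R) (m : nat) (X : 'I_m -> T -> R) : R :=
  Num.sqrt (\sum_(i < m) Ex P (fun w => X i w ^+ 2)) /
  powR (\sum_(i < m) Ex P (fun w => powR `|X i w| (2 + delta))) (2 + delta)^-1.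

(* A0 is a constant for which the Jing-Shao-Wang self-normalized moderate
   deviation bound holds (for all independent families on the space T). *)
Definition JSW_constant (d : measure_display) (T : measurableType d)
  (R : realType) (P : probability T R) (delta A0 : R) :=
  forall (m : nat) (X : 'I_m -> T -> R),
    (0 < m)%N ->
    (forall i, measurable_fun setT (X i)) ->
    mutually_independent P (fun i => gen_sigma [set X i]) ->
    (forall i, P.-integrable setT (fun w => (X i w)%:E)) ->
    (forall i, Ex P (X i) = 0) ->
    (forall i, (0 < \int[P]_w (powR `|X i w| (2 + delta))%:E)%E) ->
    (forall i, (\int[P]_w (powR `|X i w| (2 + delta))%:E < +oo)%E) ->
    forall t : R, 0 <= t -> t <= jsw_d P delta X ->
      `| fine (P [set w | t <= (\sum_(i < m) X i w) /
                                Num.sqrt (\sum_(i < m) X i w ^+ 2)])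
         - (1 - Phi t) |
      <= A0 * powR (1 + t) (1 + delta) * expR (- t ^+ 2 / 2)
           / powR (jsw_d P delta X) (2 + delta).

Definition d_n_delta (d : measure_display) (T : measurableType d) (R : realType)
  (P : probability T R) (delta : R) (n L : nat)
  (z : 'I_n -> 'I_L -> T -> R) (u : 'I_n -> T -> R) : R :=
  inf [set jsw_d P delta (fun i w => z i l w * u i w) | l in [set: 'I_L]].

From HB Require Import structures.
From mathcomp Require Import all_boot all_order all_algebra.
From mathcomp Require Import all_classical all_reals all_analysis.
From mathcomp Require Import ring lra.
From mathcomp Require Import measurable_realfun.
Import Order.TTheory GRing.Theory Num.Theory.
Local Open Scope classical_set_scope.
Local Open Scope ring_scope.

Set Implicit Arguments. Unset Strict Implicit. Unset Printing Implicit Defensive.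

(* On the event where E_n[U^2] <= sigma_*^2 and, for every instrument l, both
   self-normalised sums +-(sum_i z_li u_i) / V_l stay below t = A sqrt(2 log L),
   the true beta* is feasible: V_l <= z_l* sqrt(n E_n[U^2]) turns the
   self-normalised bound into the constraint |.|_oo <= sigma_* r.  For a
   solution bhat, put Delta = D_X^-1 bhat - D_X^-1 beta*.  Minimality of
   |D_X^-1 bhat|_1 puts Delta in the cone C_J, J the support of beta*, and
   feasibility of both vectors gives |Psi_n Delta|_oo <= 2 sigma_* r; the
   definitions of the sensitivities then give both estimates.  The bad event
   is controlled by Assumption 2 and a union bound over the 2L one-sided
   Jing-Shao-Wang tails at t, which apply because the assumption on L is
   exactly t <= d_{n,delta}; finally L e^{-t^2/2} = L^{1-A^2}. *)

Section max_norms.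
Variable R : realType.
Implicit Types (I : finType) (c B : R).

Lemma bigmaxr0_ge0 I (f : I -> R) : 0 <= \big[Num.max/0]_(i : I) f i.
Proof. by elim/big_rec: _ => // i m _ hm; rewrite le_max hm orbT. Qed.

Lemma le_bigmaxr0 I (f : I -> R) i : f i <= \big[Num.max/0]_(j : I) f j.
Proof. by rewrite (bigD1 i) //= le_max lexx. Qed.

Lemma bigmaxr0_le I (f : I -> R) B : 0 <= B -> (forall i, f i <= B) ->
  \big[Num.max/0]_(i : I) f i <= B.
Proof. by move=> B0 hf; elim/big_ind: _ => // a b ha hb; rewrite ge_max ha hb. Qed.

Lemma bigmaxr0_pMl I (f : I -> R) c : 0 <= c ->
  \big[Num.max/0]_(i : I) (c * f i) = c * \big[Num.max/0]_(i : I) f i.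
Proof.
move=> c0; rewrite (big_morph (fun x => c * x) (id1 := 0) (op1 := Num.max)) ?mulr0 //.
by move=> a b; rewrite maxr_pMr.
Qed.

Lemma linfnorm_ge0 L (v : 'I_L -> R) : 0 <= linfnorm v.
Proof. exact: bigmaxr0_ge0. Qed.

Lemma le_linfnorm L (v : 'I_L -> R) l : `|v l| <= linfnorm v.
Proof. exact: (le_bigmaxr0 (fun l => `|v l|)). Qed.

Lemma linfnorm_le L (v : 'I_L -> R) B : 0 <= B -> (forall l, `|v l| <= B) ->
  linfnorm v <= B.
Proof. exact: bigmaxr0_le. Qed.

Lemma linfnormZ L (v : 'I_L -> R) c : linfnorm (fun l => c * v l) = `|c| * linfnorm v.
Proof. by rewrite /linfnorm -bigmaxr0_pMl //; apply: eq_bigr => l _; rewrite normrM. Qed.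

Lemma lpnorm_ge0 K p (v : 'I_K -> R) : 0 <= lpnorm p v.
Proof. by case: p => [q||] /=; [exact: powR_ge0|exact: bigmaxr0_ge0|]. Qed.

Lemma lpnormZ K p (v : 'I_K -> R) c : (1%:E <= p)%E -> 0 <= c ->
  lpnorm p (fun k => c * v k) = c * lpnorm p v.
Proof.
case: p => [q||] //= q1 c0.
- rewrite lee_fin in q1.
  have q0 : q != 0 by rewrite gt_eqF // (lt_le_trans ltr01).
  under eq_bigr do rewrite normrM (ger0_norm c0) powRM //.
  rewrite -mulr_sumr powRM ?powR_ge0 //; last by apply: sumr_ge0 => i _; exact: powR_ge0.
  by rewrite -powRrM mulfV // powRr1.
- by rewrite -bigmaxr0_pMl //; apply: eq_bigr => k _; rewrite normrM ger0_norm.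
Qed.

End max_norms.

Section sensitivity.
Variables (R : realType) (n K L : nat).
Variables (x : 'I_n -> 'I_K -> R) (z : 'I_n -> 'I_L -> R).
Implicit Types (J : set 'I_K) (D : 'I_K -> R) (M : R).

Lemma PsimulZ D c : Psimul x z (fun k => c * D k) = fun l => c * Psimul x z D l.
Proof.
by apply: funext => l; rewrite /Psimul mulr_sumr; apply: eq_bigr => k _; rewrite mulrCA.
Qed.

Lemma coneCZ J D c : coneC J D -> coneC J (fun k => c * D k).
Proof.
rewrite /coneC /= => h.
under eq_bigr do rewrite normrM.
under [X in _ <= X]eq_bigr do rewrite normrM.
by rewrite -!mulr_sumr ler_wpM2l.
Qed.

Lemma lpnorm_mul_kappa_le J D M p : coneC J D -> linfnorm (Psimul x z D) <= M ->
  (1%:E <= p)%E -> ((lpnorm p D)%:E * kappa x z p J <= M%:E)%E.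
Proof.
move=> coneD PsiD p1.
have M0 : 0 <= M := le_trans (linfnorm_ge0 _) PsiD.
have [->|N0] := eqVneq (lpnorm p D) 0; first by rewrite mul0e lee_fin.
have Np : 0 < lpnorm p D by rewrite lt_neqAle eq_sym N0 lpnorm_ge0.
have kappa_le : (kappa x z p J <= ((lpnorm p D)^-1 * linfnorm (Psimul x z D))%:E)%E.
  apply: ereal_inf_lbound; exists (fun k => (lpnorm p D)^-1 * D k).
    by split; [exact: coneCZ | rewrite lpnormZ ?mulVf // invr_ge0 ltW].
  by rewrite PsimulZ linfnormZ ger0_norm // invr_ge0 ltW.
apply: le_trans (lee_wpmul2l _ kappa_le) _; first by rewrite lee_fin ltW.
by rewrite -EFinM lee_fin mulrA mulfV // mul1r.
Qed.

Lemma normr_mul_kappa_star_le J D M k : coneC J D -> linfnorm (Psimul x z D) <= M ->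
  ((`|D k|)%:E * kappa_star x z k J <= M%:E)%E.
Proof.
move=> coneD PsiD.
have M0 : 0 <= M := le_trans (linfnorm_ge0 _) PsiD.
have [->|Dk0] := eqVneq (D k) 0; first by rewrite normr0 mul0e lee_fin.
have kappa_le : (kappa_star x z k J <= (`|D k|^-1 * linfnorm (Psimul x z D))%:E)%E.
  apply: ereal_inf_lbound; exists (fun j => (D k)^-1 * D j).
    by split; [exact: coneCZ | rewrite mulVf].
  by rewrite PsimulZ linfnormZ normrV ?unitfE.
apply: le_trans (lee_wpmul2l _ kappa_le) _; first by rewrite lee_fin.
by rewrite -EFinM lee_fin mulrA mulfV ?normr_eq0 // mul1r.
Qed.

End sensitivity.

Lemma coneC_sub_of_l1norm_le (R : realType) K (a b : 'I_K -> R) :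
  l1norm b <= l1norm a -> coneC (supp a) (fun k => b k - a k).
Proof.
rewrite /l1norm /coneC /supp /= => le_ba.
rewrite (eq_bigl (fun k => a k == 0)) => [|k]; last by rewrite asboolb negbK.
rewrite [X in _ <= X](eq_bigl (fun k => a k != 0)) => [|k]; last by rewrite asboolb.
move: le_ba; rewrite (bigID (fun k => a k == 0)) [X in _ <= X -> _](bigID (fun k => a k == 0)) /=.
have -> : \sum_(k < K | a k == 0) `|a k| = 0.
  by apply: big1 => k /eqP ->; rewrite normr0.
have -> : \sum_(k < K | a k == 0) `|b k| = \sum_(k < K | a k == 0) `|b k - a k|.
  by apply: eq_bigr => k /eqP ->; rewrite subr0.
have on_supp : \sum_(k < K | a k != 0) `|a k| <=
    \sum_(k < K | a k != 0) `|b k| + \sum_(k < K | a k != 0) `|b k - a k|.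
  rewrite -big_split /=; apply: ler_sum => k _.
  by rewrite [in leLHS](_ : a k = b k - (b k - a k)) ?ler_normB //; ring.
lra.
Qed.

Section dantzig_selector.
Variables (R : realType) (n K L : nat) (y : 'I_n -> R).
Variables (x : 'I_n -> 'I_K -> R) (z : 'I_n -> 'I_L -> R).
Hypothesis colmax_x_gt0 : forall k, 0 < colmax x k.
Implicit Types (b : 'I_K -> R) (B : R).

Definition residual b l : R :=
  (n%:R)^-1 * (colmax z l)^-1 * \sum_(i < n) z i l * (y i - \sum_(k < K) x i k * b k).

Lemma Psimul_scaled_sub b1 b2 l :
  Psimul x z (fun k => colmax x k * (b2 k - b1 k)) l = residual b1 l - residual b2 l.
Proof.
rewrite /residual -mulrBr -sumrB /Psimul.
under eq_bigr => k _.
  rewrite /Psi -!mulrA (mulrCA (\sum_(i < n) _)) mulKf ?gt_eqF // mulrA.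
  over.
rewrite /= -mulr_sumr; congr (_ * _).
rewrite (eq_bigr (fun k => \sum_(i < n) z i l * x i k * (b2 k - b1 k))) => [|k _]; last first.
  by rewrite big_distrl.
rewrite exchange_big /=; apply: eq_bigr => i _.
rewrite -mulrBr opprB addrC addrA subrK -sumrB mulr_sumr; apply: eq_bigr => k _.
by rewrite mulrBr mulrBr !mulrA.
Qed.

Lemma linfnorm_Psimul_scaled_sub_le B b1 b2 :
  feasible y x z B b1 -> feasible y x z B b2 ->
  linfnorm (Psimul x z (fun k => colmax x k * (b2 k - b1 k))) <= 2 * B.
Proof.
move=> feas1 feas2; have B0 : 0 <= B := le_trans (linfnorm_ge0 _) feas1.
apply: linfnorm_le => [|l]; first by rewrite mulr_ge0.
rewrite Psimul_scaled_sub mulr2n mulrDl mul1r (le_trans (ler_normB _ _)) //.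
apply: lerD; first exact: le_trans (le_linfnorm (residual b1) l) feas1.
exact: le_trans (le_linfnorm (residual b2) l) feas2.
Qed.

Lemma is_solution_coneC B bs bh : feasible y x z B bs -> is_solution y x z B bh ->
  coneC (supp bs) (fun k => colmax x k * (bh k - bs k)).
Proof.
move=> feas [_ opt].
have -> : supp bs = supp (fun k => colmax x k * bs k).
  by apply/funext => k; rewrite /supp /= mulf_eq0 (gt_eqF (colmax_x_gt0 k)).
have -> : (fun k => colmax x k * (bh k - bs k)) =
          (fun k => colmax x k * bh k - colmax x k * bs k).
  by apply/funext => k; rewrite mulrBr.
exact: coneC_sub_of_l1norm_le (opt _ feas).
Qed.

Lemma is_solution_error_le B bs bh : feasible y x z B bs -> is_solution y x z B bh ->
  (forall p, (1%:E <= p)%E ->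
     ((lpnorm p (fun k => colmax x k * (bh k - bs k)))%:E * kappa x z p (supp bs)
      <= (2 * B)%:E)%E) /\
  (forall k, ((`|bh k - bs k| * colmax x k)%:E * kappa_star x z k (supp bs) <= (2 * B)%:E)%E).
Proof.
move=> feas sol; have cone := is_solution_coneC feas sol.
have Psi_le := linfnorm_Psimul_scaled_sub_le feas sol.1.
split => [p p1|k]; first exact: lpnorm_mul_kappa_le cone Psi_le p1.
rewrite mulrC -(gtr0_norm (colmax_x_gt0 k)) -normrM.
exact: normr_mul_kappa_star_le cone Psi_le.
Qed.

End dantzig_selector.

Definition selfnorm (R : realType) m (v : 'I_m -> R) : R :=
  (\sum_(i < m) v i) / Num.sqrt (\sum_(i < m) v i ^+ 2).

Lemma normr_sum_le_selfnorm (R : realType) m (v : 'I_m -> R) t :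
  ~ t <= selfnorm v -> ~ t <= selfnorm (fun i => - v i) ->
  `|\sum_(i < m) v i| <= t * Num.sqrt (\sum_(i < m) v i ^+ 2).
Proof.
rewrite /selfnorm sumrN.
have -> : \sum_(i < m) (- v i) ^+ 2 = \sum_(i < m) v i ^+ 2.
  by apply: eq_bigr => i _; rewrite sqrrN.
set S := \sum_(i < m) v i; set V := \sum_(i < m) v i ^+ 2.
move=> /negP; rewrite -ltNge => ltS /negP; rewrite -ltNge => ltNS.
have [sV0|sV_neq0] := eqVneq (Num.sqrt V) 0.
  have V0 : V = 0.
    apply/eqP; rewrite eq_le -sqrtr_eq0 sV0 eqxx /=.
    by apply: sumr_ge0 => i _; exact: sqr_ge0.
  have v0 : forall i, v i = 0.
    move=> i; apply/eqP; rewrite -sqrf_eq0; apply/eqP.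
    exact: (psumr_eq0P (fun i _ => sqr_ge0 (v i)) V0).
  by rewrite /S big1 ?normr0 // sV0 mulr0.
have sV_gt0 : 0 < Num.sqrt V by rewrite lt_neqAle eq_sym sV_neq0 sqrtr_ge0.
by rewrite ler_norml lerNl -!ler_pdivrMr // (ltW ltS) (ltW ltNS).
Qed.

Lemma sqrt_sum_sqr_mul_le (R : realType) m (a b : 'I_m -> R) c : 0 <= c ->
  (forall i, `|a i| <= c) ->
  Num.sqrt (\sum_(i < m) (a i * b i) ^+ 2) <= c * Num.sqrt (\sum_(i < m) b i ^+ 2).
Proof.
move=> c0 le_ac; rewrite -(ger0_norm c0) -sqrtr_sqr -sqrtrM ?sqr_ge0 //.
apply: ler_wsqrtr; rewrite mulr_sumr; apply: ler_sum => i _.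
rewrite exprMn ler_wpM2r ?sqr_ge0 // -real_normK ?num_real //.
by rewrite ler_sqr ?nnegrE ?normr_ge0 // ger0_norm.
Qed.

Lemma feasible_of_not_le_selfnorm (R : realType) n K L (y u : 'I_n -> R)
    (x : 'I_n -> 'I_K -> R) (z : 'I_n -> 'I_L -> R) (bs : 'I_K -> R) s t :
  (0 < n)%N -> (forall l, 0 < colmax z l) -> 0 <= s -> 0 <= t ->
  (forall i, y i = \sum_(k < K) x i k * bs k + u i) ->
  (n%:R)^-1 * \sum_(i < n) u i ^+ 2 <= s ^+ 2 ->
  (forall l, ~ t <= selfnorm (fun i => z i l * u i)) ->
  (forall l, ~ t <= selfnorm (fun i => - (z i l * u i))) ->
  feasible y x z (s * (t / Num.sqrt n%:R)) bs.
Proof.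
move=> n_gt0 zmax_gt0 s0 t0 y_model mean_u2 tailP tailN.
have n_pos : 0 < (n%:R : R) by rewrite ltr0n.
have sn_pos : 0 < Num.sqrt (n%:R : R) by rewrite sqrtr_gt0.
apply: linfnorm_le => [|l]; first by rewrite mulr_ge0 ?divr_ge0 ?sqrtr_ge0.
under eq_bigr do rewrite y_model addrAC subrr add0r.
set zs := colmax z l; have zs_pos : 0 < zs := zmax_gt0 l.
have sqrt_u2 : Num.sqrt (\sum_(i < n) u i ^+ 2) <= s * Num.sqrt n%:R.
  rewrite -(ger0_norm s0) -sqrtr_sqr -sqrtrM ?sqr_ge0 // ler_wsqrtr //.
  by rewrite mulrC -ler_pdivrMl.
have sum_zu : `|\sum_(i < n) z i l * u i| <= t * (zs * (s * Num.sqrt n%:R)).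
  apply: le_trans (normr_sum_le_selfnorm (tailP l) (tailN l)) _.
  apply: ler_wpM2l => //.
  apply: le_trans (@sqrt_sum_sqr_mul_le R n (z^~ l) u zs (ltW zs_pos) _) _.
    by move=> i; exact: (le_bigmaxr0 (fun i => `|z i l|)).
  by rewrite ler_wpM2l // ltW.
rewrite normrM ger0_norm ?mulr_ge0 ?invr_ge0 ?ler0n ?(ltW zs_pos) //.
apply: le_trans (ler_wpM2l _ sum_zu) _; first by rewrite mulr_ge0 ?invr_ge0 ?ler0n ?ltW.
have -> : (n%:R : R)^-1 = (Num.sqrt n%:R ^+ 2)^-1 by rewrite sqr_sqrtr // ltW.
by rewrite [leLHS](_ : _ = s * (t / Num.sqrt n%:R)) //; field; rewrite !gt_eqF.
Qed.

Section independence.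
Context d (T : measurableType d) (R : realType) (P : probability T R).

Definition preimages (F : set (T -> R)) : set (set T) :=
  \bigcup_(f in F) [set f @^-1` B | B in [set B : set R | measurable B]].

Lemma measurable_fun_preimages (F : set (T -> R)) (f : T -> R) :
  F f -> measurable_fun (setT : set (g_sigma_algebraType (preimages F))) f.
Proof.
by move=> Ff _ B mB; rewrite setTI; apply: sub_sigma_algebra; exists f => //; exists B.
Qed.

Lemma gen_sigma1_sub (F : set (T -> R)) (h : T -> R) :
  measurable_fun (setT : set (g_sigma_algebraType (preimages F))) h ->
  gen_sigma [set h] `<=` gen_sigma F.
Proof.
move=> mh; apply: smallest_sub; first exact: smallest_sigma_algebra.
by move=> _ [f /= -> [B mB <-]]; have := mh measurableT B mB; rewrite setTI.
Qed.

Lemma mutually_independent_sub (I : finType) (F G : I -> set (set T)) :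
  mutually_independent P F -> (forall i, G i `<=` F i) -> mutually_independent P G.
Proof. by move=> indF GF S E GE; apply: indF => i iS; apply: GF; exact: GE. Qed.

Lemma mutually_independent_mul (I : finType) (F : I -> set (T -> R)) (f g : I -> T -> R) :
  (forall i, F i (f i)) -> (forall i, F i (g i)) ->
  mutually_independent P (fun i => gen_sigma (F i)) ->
  mutually_independent P (fun i => gen_sigma [set fun w => f i w * g i w]).
Proof.
move=> Ff Fg indF; apply: mutually_independent_sub indF _ => i.
by apply: gen_sigma1_sub; apply: measurable_funM; exact: measurable_fun_preimages.
Qed.

Lemma mutually_independent_opp (I : finType) (f : I -> T -> R) :
  mutually_independent P (fun i => gen_sigma [set f i]) ->
  mutually_independent P (fun i => gen_sigma [set fun w => - f i w]).
Proof.
move=> indf; apply: mutually_independent_sub indf _ => i.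
by apply: gen_sigma1_sub; apply: measurable_funN; exact: measurable_fun_preimages.
Qed.

End independence.

Section probability_facts.
Context d (T : measurableType d) (R : realType) (P : probability T R).

Lemma probability_fineK (A : set T) : measurable A -> (fine (P A))%:E = P A.
Proof. by move=> mA; rewrite fineK // fin_num_measure. Qed.

Lemma measurable_set_le (f g : T -> R) : measurable_fun setT f -> measurable_fun setT g ->
  measurable [set w | f w <= g w].
Proof. by move=> mf mg; have := measurable_fun_le measurableT mf mg; rewrite setTI. Qed.

Lemma measurable_selfnorm m (X : 'I_m -> T -> R) : (forall i, measurable_fun setT (X i)) ->
  measurable_fun setT (fun w => selfnorm (fun i => X i w)).
Proof.
move=> mX; rewrite /selfnorm.
have sum_sqr_ge0 w : 0 <= \sum_(i < m) X i w ^+ 2 by apply: sumr_ge0 => i _; exact: sqr_ge0.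
(* [1 / sqrt] is rewritten with [powR], whose measurability is in the library *)
under eq_fun => w do
  rewrite -(powRr1 (sqrtr_ge0 (\sum_(i < m) X i w ^+ 2))) -powRN -powR12_sqrt ?sum_sqr_ge0 //.
apply: measurable_funM; first exact: measurable_sum.
apply: measurableT_comp (measurable_powR _) _.
apply: measurableT_comp (measurable_powR _) _.
by apply: measurable_sum => i; exact: measurable_funX.
Qed.

Lemma fine_measureU_le (A B : set T) : measurable A -> measurable B ->
  fine (P (A `|` B)) <= fine (P A) + fine (P B).
Proof.
move=> mA mB; have mAB : measurable (A `|` B) by exact: measurableU.
by rewrite -lee_fin EFinD !probability_fineK //; exact: measureU2.
Qed.

Lemma fine_measure_bigsetU_le (I : finType) (B : I -> set T) : (forall i, measurable (B i)) ->
  fine (P (\big[setU/set0]_(i : I) B i)) <= \sum_(i : I) fine (P (B i)).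
Proof.
move=> mB; suff [] : measurable (\big[setU/set0]_(i : I) B i) /\
    fine (P (\big[setU/set0]_(i : I) B i)) <= \sum_(i : I) fine (P (B i)) by [].
apply: (big_rec2 (fun s U => measurable U /\ fine (P U) <= s)); first by rewrite measure0.
move=> i s U _ [mU le_Us]; split; first exact: measurableU.
by apply: le_trans (fine_measureU_le (mB i) mU) _; rewrite lerD2l.
Qed.

Lemma moment_gt0 (f : T -> R) p : measurable_fun setT f -> 0 < p ->
  ~ {ae P, forall w, f w = 0} -> (0 < \int[P]_w (powR `|f w| p)%:E)%E.
Proof.
move=> mf p0 nondeg.
have mfp : measurable_fun setT (EFin \o (fun w => powR `|f w| p)).
  apply/measurable_EFinP; apply: measurableT_comp (measurable_powR _) _.
  exact: measurableT_comp.
have int_ge0 : (0 <= \int[P]_w (powR `|f w| p)%:E)%E.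
  by apply: integral_ge0 => w _; rewrite lee_fin powR_ge0.
rewrite lt_neqAle int_ge0 andbT; apply/negP => /eqP int0; apply: nondeg.
have : (\int[P]_(w in setT) `|(EFin \o (fun w => powR `|f w| p)) w|%E = 0)%E.
  by rewrite int0; apply: eq_integral => w _; rewrite gee0_abs // lee_fin powR_ge0.
move/(ae_eq_integral_abs _ measurableT mfp); apply: filterS => w /(_ I) /= [] /eqP.
by rewrite powR_eq0 normr_eq0 => /andP[/eqP ->].
Qed.

Lemma Ex_opp (f : T -> R) : P.-integrable setT (fun w => (f w)%:E) ->
  Ex P (fun w => - f w) = - Ex P f.
Proof.
move=> intf; transitivity (Rintegral P setT (fun w => -1 * f w)).
  by rewrite /Ex /Rintegral; congr fine; apply: eq_integral => w _; rewrite mulN1r.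
by rewrite RintegralZl // mulN1r.
Qed.

Lemma integrable_opp (f : T -> R) : P.-integrable setT (fun w => (f w)%:E) ->
  P.-integrable setT (fun w => (- f w)%:E).
Proof. by move/integrableN. Qed.

End probability_facts.

Definition jsw_err (R : realType) (delta A0 t D : R) : R :=
  A0 * powR (1 + t) (1 + delta) * expR (- t ^+ 2 / 2) / powR D (2 + delta).

Lemma jsw_err_le (R : realType) (delta A0 t D D' : R) : 0 <= delta ->
  0 <= jsw_err delta A0 t D' -> 0 < D -> D <= D' -> jsw_err delta A0 t D' <= jsw_err delta A0 t D.
Proof.
rewrite /jsw_err; set c := A0 * _ * _ => delta_ge0 err_ge0 D_gt0 DD'.
have pD_gt0 : 0 < powR D (2 + delta) by rewrite powR_gt0.
have pDD' : powR D (2 + delta) <= powR D' (2 + delta).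
  apply: ge0_ler_powR => //; first by rewrite addr_ge0.
    by rewrite nnegrE ltW.
  by rewrite nnegrE (le_trans (ltW D_gt0)).
have pD'_gt0 := lt_le_trans pD_gt0 pDD'.
have c_ge0 : 0 <= c by rewrite -(divfK (lt0r_neq0 pD'_gt0) c) mulr_ge0 // ltW.
by rewrite ler_wpM2l // lef_pV2 ?posrE.
Qed.

Section selfnorm_upper_tail.
Context d (T : measurableType d) (R : realType) (P : probability T R).
Variables (delta A0 : R) (m : nat) (X : 'I_m -> T -> R).
Hypotheses (JSW : JSW_constant P delta A0) (delta_gt0 : 0 < delta) (m_gt0 : (0 < m)%N).
Hypotheses (mX : forall i, measurable_fun setT (X i))
  (indX : mutually_independent P (fun i => gen_sigma [set X i]))
  (intX : forall i, P.-integrable setT (fun w => (X i w)%:E))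
  (centered : forall i, Ex P (X i) = 0)
  (nondeg : forall i, ~ {ae P, forall w, X i w = 0})
  (moment_fin : forall i, (\int[P]_w (powR `|X i w| (2 + delta))%:E < +oo)%E).

(* The disjunction is needed because [jsw_err] vanishes at [D = 0] (as [x / 0 = 0]). *)
Lemma selfnorm_upper_tail_le t D : 0 <= t -> t <= D -> D <= jsw_d P delta X ->
  0 < D \/ D = jsw_d P delta X ->
  fine (P [set w | t <= selfnorm (fun i => X i w)]) <= 1 - Phi t + jsw_err delta A0 t D.
Proof.
move=> t_ge0 tD Dd D_cases.
have moment_pos i : (0 < \int[P]_w (powR `|X i w| (2 + delta))%:E)%E.
  by apply: moment_gt0 => //; rewrite addr_gt0.
have := JSW m_gt0 mX indX intX centered moment_pos moment_fin t_ge0 (le_trans tD Dd).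
rewrite -/(jsw_err delta A0 t (jsw_d P delta X)) => dev.
have err_le : jsw_err delta A0 t (jsw_d P delta X) <= jsw_err delta A0 t D.
  case: D_cases => [D_gt0|->] //; apply: jsw_err_le => //; first exact: ltW.
  exact: le_trans (normr_ge0 _) dev.
have := le_trans (ler_norm _) dev; rewrite /selfnorm; lra.
Qed.

End selfnorm_upper_tail.

Section selfnorm_two_sided_tail.
Context d (T : measurableType d) (R : realType) (P : probability T R).
Variables (delta A0 : R) (m : nat) (X : 'I_m -> T -> R).
Hypotheses (JSW : JSW_constant P delta A0) (delta_gt0 : 0 < delta) (m_gt0 : (0 < m)%N).
Hypotheses (mX : forall i, measurable_fun setT (X i))
  (indX : mutually_independent P (fun i => gen_sigma [set X i]))
  (intX : forall i, P.-integrable setT (fun w => (X i w)%:E))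
  (centered : forall i, Ex P (X i) = 0)
  (nondeg : forall i, ~ {ae P, forall w, X i w = 0})
  (moment_fin : forall i, (\int[P]_w (powR `|X i w| (2 + delta))%:E < +oo)%E).

Lemma jsw_d_opp : jsw_d P delta (fun i w => - X i w) = jsw_d P delta X.
Proof.
rewrite /jsw_d; congr (Num.sqrt _ / powR _ _); apply: eq_bigr => i _; congr Ex.
  by apply: funext => w; rewrite sqrrN.
by apply: funext => w; rewrite normrN.
Qed.

Lemma selfnorm_two_sided_tail_le t D : 0 <= t -> t <= D -> D <= jsw_d P delta X ->
  0 < D \/ D = jsw_d P delta X ->
  fine (P [set w | t <= selfnorm (fun i => X i w)]) +
  fine (P [set w | t <= selfnorm (fun i => - X i w)])
  <= 2 * (1 - Phi t + jsw_err delta A0 t D).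
Proof.
move=> t_ge0 tD Dd D_cases.
have upper := selfnorm_upper_tail_le JSW delta_gt0 m_gt0 mX indX intX centered nondeg
  moment_fin t_ge0 tD Dd D_cases.
have mXN i : measurable_fun setT (fun w => - X i w) by exact: measurable_funN.
have intXN i : P.-integrable setT (fun w => (- X i w)%:E) by exact: integrable_opp.
have centeredN i : Ex P (fun w => - X i w) = 0 by rewrite Ex_opp // centered oppr0.
have nondegN i : ~ {ae P, forall w, - X i w = 0}.
  by move=> aeN; apply: (@nondeg i); move: aeN; apply: filterS => w /eqP; rewrite oppr_eq0 => /eqP.
have moment_finN i : (\int[P]_w (powR `|- X i w| (2 + delta))%:E < +oo)%E.
  by under eq_integral do rewrite normrN.
have := selfnorm_upper_tail_le JSW delta_gt0 m_gt0 mXN (mutually_independent_opp indX)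
  intXN centeredN nondegN moment_finN t_ge0 tD; rewrite jsw_d_opp => /(_ Dd D_cases).
lra.
Qed.

End selfnorm_two_sided_tail.

Section threshold.
Variables (R : realType) (A : R).
Hypothesis A_gt0 : 0 < A.

Lemma threshold_sqr (L : R) : 1 <= L ->
  (A * Num.sqrt (2 * ln L)) ^+ 2 = A ^+ 2 * (2 * ln L).
Proof. by move=> L_ge1; rewrite exprMn sqr_sqrtr // mulr_ge0 // ln_ge0. Qed.

Lemma threshold_le (L D : R) : 0 <= D -> 1 <= L ->
  L <= expR (D ^+ 2 / (2 * A ^+ 2)) -> A * Num.sqrt (2 * ln L) <= D.
Proof.
move=> D_ge0 L_ge1 L_le.
have lnL_le : ln L <= D ^+ 2 / (2 * A ^+ 2).
  by rewrite -[leRHS]expRK ler_ln ?posrE ?expR_gt0 // (lt_le_trans ltr01).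
rewrite -(ler_pXn2r (_ : (0 < 2)%N)) ?nnegrE ?mulr_ge0 ?sqrtr_ge0 ?(ltW A_gt0) //.
move: lnL_le; rewrite threshold_sqr // ler_pdivlMr ?mulr_gt0 ?exprn_gt0 //; lra.
Qed.

Lemma mul_expR_threshold (L : R) : 1 <= L ->
  L * expR (- (A * Num.sqrt (2 * ln L)) ^+ 2 / 2) = (powR L (A ^+ 2 - 1))^-1.
Proof.
move=> L_ge1; have L_pos : L \in Num.pos by rewrite posrE (lt_le_trans ltr01).
rewrite /powR gt_eqF -?posrE // -expRN -{1}(lnK L_pos) -expRD threshold_sqr //.
by congr expR; field.
Qed.

Lemma threshold_eq0 (L : nat) : (0 < L)%N -> A * Num.sqrt (2 * ln (L%:R : R)) = 0 -> L = 1%N.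
Proof.
move=> L_gt0 /eqP; rewrite mulf_eq0 (gt_eqF A_gt0) sqrtr_eq0 /=.
rewrite pmulr_rle0 // => lnL_le0; apply/eqP; rewrite -(pnatr_eq1 R) eq_le ler1n L_gt0 andbT.
by rewrite -ler_ln ?posrE ?ltr0n // ln1.
Qed.

End threshold.

Section d_n_delta_bounds.
Context d (T : measurableType d) (R : realType) (P : probability T R).
Variables (delta : R) (n L : nat) (z : 'I_n -> 'I_L -> T -> R) (u : 'I_n -> T -> R).

Lemma jsw_d_ge0 m (X : 'I_m -> T -> R) : 0 <= jsw_d P delta X.
Proof. by rewrite /jsw_d divr_ge0 ?sqrtr_ge0 ?powR_ge0. Qed.

Lemma d_n_delta_le l : d_n_delta P delta z u <= jsw_d P delta (fun i w => z i l w * u i w).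
Proof. by apply: ge_inf; [exists 0 => _ [l' _ <-]; exact: jsw_d_ge0 | exists l]. Qed.

Lemma d_n_delta_ge0 : (0 < L)%N -> 0 <= d_n_delta P delta z u.
Proof.
move=> L_gt0; apply: lb_le_inf; first by eexists; exists (Ordinal L_gt0).
by move=> _ [l _ <-]; exact: jsw_d_ge0.
Qed.

Lemma d_n_delta_card1 l : L = 1%N ->
  d_n_delta P delta z u = jsw_d P delta (fun i w => z i l w * u i w).
Proof.
move=> L1; rewrite /d_n_delta -[X in _ = X]inf1; congr inf.
apply/seteqP; split => [_ [l' _ <-]|_ ->]; last by exists l.
suff -> : l' = l by [].
apply: val_inj; move: (ltn_ord l) (ltn_ord l'); case: l l' => [a ?] [b ?] /=.
by rewrite L1 !ltnS !leqn0 => /eqP -> /eqP ->.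
Qed.

End d_n_delta_bounds.

Lemma probability_setC_setU_bigsetU_ge d (T : measurableType d) (R : realType)
    (P : probability T R) (I : finType) (U : set T) (B C : I -> set T) (e g : R) :
  measurable U -> (forall i, measurable (B i)) -> (forall i, measurable (C i)) ->
  ((1 - g)%:E <= P U)%E -> (forall i, fine (P (B i)) + fine (P (C i)) <= e) ->
  ((1 - #|I|%:R * e - g)%:E <= P (~` (~` U `|` \big[setU/set0]_(i : I) (B i `|` C i))))%E.
Proof.
move=> mU mB mC; rewrite -(probability_fineK P mU) lee_fin => PU BC_le.
have mBCi i : measurable (B i `|` C i) by exact: measurableU.
have mBC : measurable (\big[setU/set0]_(i : I) (B i `|` C i)).
  by apply: bigsetU_measurable => i _.
have mBad : measurable (~` U `|` \big[setU/set0]_(i : I) (B i `|` C i)).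
  exact: measurableU (measurableC mU) mBC.
have PBad : fine (P (~` U `|` \big[setU/set0]_(i : I) (B i `|` C i)))
    <= (1 - fine (P U)) + #|I|%:R * e.
  apply: le_trans (fine_measureU_le P (measurableC mU) mBC) _.
  rewrite probability_setC // -(probability_fineK P mU) -EFinB /= lerD2l.
  apply: le_trans (fine_measure_bigsetU_le P mBCi) _.
  rewrite mulr_natl -sumr_const; apply: ler_sum => i _.
  exact: le_trans (fine_measureU_le P (mB i) (mC i)) (BC_le i).
by rewrite probability_setC // -(probability_fineK P mBad) -EFinB lee_fin; lra.
Qed.

Section instrumental_model.
Context d (T : measurableType d) (R : realType) (P : probability T R).
Variables (n L : nat) (z : 'I_n -> 'I_L -> T -> R) (u : 'I_n -> T -> R) (delta A0 : R).
Hypotheses (mz : forall i l, measurable_fun setT (z i l))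
  (mu : forall i, measurable_fun setT (u i)).

Definition good_event (s t : R) : set T :=
  ~` (~` [set w | (n%:R)^-1 * \sum_(i < n) u i w ^+ 2 <= s ^+ 2] `|`
      \big[setU/set0]_(l : 'I_L) ([set w | t <= selfnorm (fun i => z i l w * u i w)] `|`
                                  [set w | t <= selfnorm (fun i => - (z i l w * u i w))])).

Lemma measurable_tail (X : 'I_n -> T -> R) (t : R) : (forall i, measurable_fun setT (X i)) ->
  measurable [set w | t <= selfnorm (fun i => X i w)].
Proof. by move=> mX; apply: measurable_set_le => //; exact: measurable_selfnorm. Qed.

Lemma measurable_mean_sqr_le (s : R) :
  measurable [set w | (n%:R)^-1 * \sum_(i < n) u i w ^+ 2 <= s ^+ 2].
Proof.
apply: measurable_set_le; last exact: measurable_cst.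
apply: measurable_funM; first exact: measurable_cst.
by apply: measurable_sum => i; exact: measurable_funX.
Qed.

Lemma measurable_good_event (s t : R) : measurable (good_event s t).
Proof.
apply/measurableC/measurableU; first exact/measurableC/measurable_mean_sqr_le.
apply: bigsetU_measurable => l _; apply: measurableU; apply: measurable_tail => i.
  exact: measurable_funM.
by apply: measurable_funN; exact: measurable_funM.
Qed.

Lemma probability_good_event_ge (s t e g : R) :
  ((1 - g)%:E <= P [set w | ((n%:R)^-1 * \sum_(i < n) u i w ^+ 2 <= s ^+ 2)%R])%E ->
  (forall l, fine (P [set w | t <= selfnorm (fun i => z i l w * u i w)]) +
             fine (P [set w | t <= selfnorm (fun i => - (z i l w * u i w))]) <= e) ->
  ((1 - L%:R * e - g)%:E <= P (good_event s t))%E.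
Proof.
move=> PU tails; rewrite -[L in L%:R](card_ord L).
apply: probability_setC_setU_bigsetU_ge tails => //; first exact: measurable_mean_sqr_le.
  by move=> l; apply: measurable_tail => i; exact: measurable_funM.
by move=> l; apply: measurable_tail => i; apply: measurable_funN; exact: measurable_funM.
Qed.

Lemma good_event_feasible K (y : 'I_n -> T -> R) (x : 'I_n -> 'I_K -> T -> R)
    (bs : 'I_K -> R) (s t : R) w :
  (0 < n)%N -> (forall l, 0 < colmax (fun i l => z i l w) l) -> 0 <= s -> 0 <= t ->
  (forall i, y i w = \sum_(k < K) x i k w * bs k + u i w) -> good_event s t w ->
  feasible (fun i => y i w) (fun i k => x i k w) (fun i l => z i l w)
    (s * (t / Num.sqrt n%:R)) bs.
Proof.
rewrite /good_event setCU setCK => n_gt0 zmax_gt0 s_ge0 t_ge0 y_model [mean_u2 no_tail].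
have no_tail_l l : ~ ([set w | t <= selfnorm (fun i => z i l w * u i w)] `|`
                      [set w | t <= selfnorm (fun i => - (z i l w * u i w))]) w.
  by move=> tail_l; apply: no_tail; rewrite (bigD1 l) //=; left.
apply: (feasible_of_not_le_selfnorm (u := u^~ w)) => // l tail_l; apply: (no_tail_l l).
  by left.
by right.
Qed.

Hypotheses (JSW : JSW_constant P delta A0) (delta_gt0 : 0 < delta) (n_gt0 : (0 < n)%N).
Hypotheses
  (indep_zu : forall l,
     mutually_independent P (fun i => gen_sigma [set fun w => z i l w * u i w]))
  (moment_fin : forall i l, (\int[P]_w (powR `|z i l w * u i w| (2 + delta))%:E < +oo)%E)
  (int_zu : forall i l, P.-integrable setT (fun w => (z i l w * u i w)%:E))
  (centered : forall i l, Ex P (fun w => z i l w * u i w) = 0)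
  (nondeg : forall i l, ~ {ae P, forall w, z i l w * u i w = 0}).

Lemma instrument_tails_le l (t D : R) :
  0 <= t -> t <= D -> D <= jsw_d P delta (fun i w => z i l w * u i w) ->
  0 < D \/ D = jsw_d P delta (fun i w => z i l w * u i w) ->
  fine (P [set w | t <= selfnorm (fun i => z i l w * u i w)]) +
  fine (P [set w | t <= selfnorm (fun i => - (z i l w * u i w))])
  <= 2 * (1 - Phi t + jsw_err delta A0 t D).
Proof.
by apply: (selfnorm_two_sided_tail_le JSW) => // i; exact: measurable_funM.
Qed.

End instrumental_model.

Theorem theorem7 (d : measure_display) (T : measurableType d) (R : realType)
  (P : probability T R) (n K L kend : nat)
  (y : 'I_n -> T -> R) (x : 'I_n -> 'I_K -> T -> R) (z : 'I_n -> 'I_L -> T -> R)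
  (u : 'I_n -> T -> R) (beta_star : 'I_K -> R)
  (delta A0 sigma_star gamma1 A : R) :
  (* setting *)
  (0 < n)%N -> (0 < K)%N -> (K <= L)%N -> (kend <= K)%N ->
  (forall i, measurable_fun setT (y i)) ->
  (forall i k, measurable_fun setT (x i k)) ->
  (forall i l, measurable_fun setT (z i l)) ->
  (forall i, measurable_fun setT (u i)) ->
  (forall i w, y i w = \sum_(k < K) x i k w * beta_star k + u i w) ->
  mutually_independent P (fun i : 'I_n =>
    gen_sigma ([set y i] `|` [set x i k | k in [set: 'I_K]]
               `|` [set z i l | l in [set: 'I_L]] `|` [set u i])) ->
  (forall (i : 'I_n) (l : 'I_L) (k : 'I_K),
      (l < K - kend)%N -> val k = (kend + l)%N -> z i l = x i k) ->
  (forall w k, 0 < colmax (fun i k => x i k w) k) ->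
  (forall w l, 0 < colmax (fun i l => z i l w) l) ->
  (* A_0 is the Jing-Shao-Wang constant *)
  JSW_constant P delta A0 ->
  (* Assumption 1 *)
  0 < delta <= 1 ->
  (forall i l, (\int[P]_w (powR `|z i l w * u i w| (2 + delta))%:E < +oo)%E) ->
  (forall i l, P.-integrable setT (fun w => (z i l w * u i w)%:E)) ->
  (forall i l, Ex P (fun w => z i l w * u i w) = 0) ->
  (forall i l, ~ {ae P, forall w, z i l w * u i w = 0}) ->
  (* Assumption 2 *)
  0 < sigma_star -> 0 < gamma1 < 1 ->
  (P [set w | ((n%:R)^-1 * \sum_(i < n) u i w ^+ 2 <= sigma_star ^+ 2)%R]
     >= (1 - gamma1)%:E)%E ->
  (* choice of A and L *)
  1 <= A ->
  L%:R <= expR (d_n_delta P delta z u ^+ 2 / (2 * A ^+ 2)) ->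
  let dn := d_n_delta P delta z u in
  let t := A * Num.sqrt (2 * ln (L%:R : R)) in
  let alpha := 2 * L%:R * (1 - Phi t)
               + 2 * A0 * powR (1 + t) (1 + delta)
                 / (powR (L%:R) (A ^+ 2 - 1) * powR dn (2 + delta)) in
  let r := A * Num.sqrt (2 * ln (L%:R : R) / n%:R) in
  exists E : set T, measurable E /\
    (P E >= (1 - alpha - gamma1)%:E)%E /\
    forall w, E w ->
    forall bhat : 'I_K -> R,
      is_solution (fun i => y i w) (fun i k => x i k w) (fun i l => z i l w)
        (sigma_star * r) bhat ->
      (forall p : \bar R, (1%:E <= p)%E ->
         ((lpnorm p (fun k => colmax (fun i k => x i k w) k * (bhat k - beta_star k)))%:E
           * kappa (fun i k => x i k w) (fun i l => z i l w) p (supp beta_star)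
          <= (2 * sigma_star * r)%:E)%E) /\
      (forall k : 'I_K,
         ((`|bhat k - beta_star k| * colmax (fun i k => x i k w) k)%:E
           * kappa_star (fun i k => x i k w) (fun i l => z i l w) k (supp beta_star)
          <= (2 * sigma_star * r)%:E)%E).

Proof.
move=> n_gt0 K_gt0 K_le_L _ _ _ mz mu y_model indep _ colmax_x_gt0 colmax_z_gt0 JSW
  delta_01 moment_fin int_zu centered nondeg sigma_gt0 _ PU A_ge1 L_le dn t alpha r.
have L_gt0 : (0 < L)%N := leq_trans K_gt0 K_le_L.
have A_gt0 : 0 < A := lt_le_trans ltr01 A_ge1.
have L_ge1 : 1 <= (L%:R : R) by rewrite ler1n.
have delta_gt0 : 0 < delta by case/andP: delta_01.
have t_ge0 : 0 <= t by rewrite mulr_ge0 ?sqrtr_ge0 ?ltW.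
have t_le_dn : t <= dn := threshold_le A_gt0 (d_n_delta_ge0 P delta z u L_gt0) L_ge1 L_le.
have dn_cases l : 0 < dn \/ dn = jsw_d P delta (fun i w => z i l w * u i w).
  (* [dn = 0] forces [t = 0], hence [L = 1] *)
  have [dn_gt0|dn_le0] := ltP 0 dn; [by left | right].
  have t0 : t = 0 by apply/eqP; rewrite eq_le t_ge0 andbT (le_trans t_le_dn).
  exact: d_n_delta_card1 (threshold_eq0 A_gt0 L_gt0 t0).
have alphaE : L%:R * (2 * (1 - Phi t + jsw_err delta A0 t dn)) = alpha.
  rewrite /alpha /jsw_err invfM -(@mul_expR_threshold R A _ L_ge1) -/t; ring.
have rE : r = t / Num.sqrt n%:R.
  by rewrite /r /t sqrtrM ?mulr_ge0 ?ln_ge0 // sqrtrV ?ler0n // mulrA.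
exists (good_event z u sigma_star t); split; first exact: measurable_good_event.
split.
  rewrite -alphaE; apply: probability_good_event_ge => // l.
  apply: (instrument_tails_le mz mu JSW) => //; last exact: d_n_delta_le.
  by move=> l'; apply: mutually_independent_mul indep => i; [left; right; exists l' | right].
move=> w good bh sol; rewrite -mulrA.
have := good_event_feasible n_gt0 (colmax_z_gt0 w) (ltW sigma_gt0) t_ge0 (y_model^~ w) good.
rewrite -rE => feas.
exact (is_solution_error_le (colmax_x_gt0 w) feas sol).
Qed.
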